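(* Let $a>b\geq 1$ be coprime integers and $p=a/b$ (so $p>1$). Let $\hat n$ be a positive integer, let $N=(2^b+2)\hat n$, and let $S$ be the multiset of binary strings of length $N$ consisting of one copy of $\mathbf{1}_{(2^b+1)\hat n}\circ\mathbf{0}_{\hat n}$ and $2^{a-b}$ copies of $\mathbf{0}_{N}$. For every string $s^*\in\{0,1\}^{N}$: (1) if $d(s^*,\mathbf{0}_N)=\hat n$ and $\mathrm{hs}(s^*,\mathbf{0}_N)\subseteq[(2^b+1)\hat n]$, then $\sum_{s\in S} d(s^*,s)^p=(2^a+2^{a-b})\hat n^{p}$; (2) if $d(s^*,\mathbf{0}_N)\neq\hat n$ or $\mathrm{hs}(s^*,\mathbf{0}_N)\not\subseteq[(2^b+1)\hat n]$, then $\sum_{s\in S} d(s^*,s)^p>(2^a+2^{a-b})\hat n^{p}$. (Sums over $S$ count multiplicities.)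
   Context: For binary strings $s,s'$ of equal length $n$, $d(s,s')$ denotes their Hamming distance (number of positions where they differ) and $\mathrm{hs}(s,s')=\{j\in[n]: s[j]\neq s'[j]\}$ is their Hamming set. $[t]=\{1,\dots,t\}$. $\mathbf{0}_\ell$ and $\mathbf{1}_\ell$ denote the all-zero and all-one strings of length $\ell$, and $\circ$ denotes concatenation. *)

From Stdlib Require Import Reals List Arith Bool.
Import ListNotations.
Open Scope R_scope.

(* x^y for x >= 0 and y > 0, with the convention 0^y = 0
   (Stdlib's Rpower x y = exp (y * ln x) is only meaningful for x > 0). *)
Definition rpow (x y : R) : R := if Rle_dec x 0 then 0 else Rpower x y.

Definition zeros (n : nat) : list bool := repeat false n.
Definition ones (n : nat) : list bool := repeat true n.

Fixpoint hamming (s t : list bool) : nat :=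
  match s, t with
  | x :: s', y :: t' => ((if Bool.eqb x y then 0 else 1) + hamming s' t')%nat
  | _, _ => 0%nat
  end.

(* Hamming set, with 0-based positions: j is in hs s t iff s[j] <> t[j] *)
Definition hs (s t : list bool) : list nat :=
  filter (fun j => negb (Bool.eqb (nth j s false) (nth j t false)))
         (seq 0 (length s)).

Definition sum_pow_dist (sstar : list bool) (S : list (list bool)) (p : R) : R :=
  fold_right (fun s acc => rpow (INR (hamming sstar s)) p + acc) 0 S.

Definition S_multiset (a b nh : nat) : list (list bool) :=
  (ones ((2 ^ b + 1) * nh) ++ zeros nh)
    :: repeat (zeros ((2 ^ b + 2) * nh)) (2 ^ (a - b)).

From Stdlib Require Import Reals List Lra Lia.
Open Scope R_scope.

(* Write [s* = s1 ++ s2] with [|s1| = (2^b+1) n], and let [x], [y] be the weights of [s1], [s2].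
   The cost is [c (x+y)^p + ((2^b+1) n - x + y)^p] with [c = 2^(a-b)], and [B = 2^b] satisfies
   [B^p = 2^a = c B].  Setting [K = x + y], Bernoulli's inequality [w^p >= 1 + p (w - 1)]
   applied to [K/n] and [((B+1) n - K)/(B n)] gives [c K^p + ((B+1) n - K)^p >= (c + c B) n^p],
   because the linear terms cancel; equality forces [K = n], and the cost matches this bound
   only when moreover [y = 0]. *)

Lemma rpow_0_l y : rpow 0 y = 0.
Proof. unfold rpow; destruct (Rle_dec 0 0); lra. Qed.

Lemma rpow_Rpower x y : 0 < x -> rpow x y = Rpower x y.
Proof. intros; unfold rpow; destruct (Rle_dec x 0); lra. Qed.

Lemma rpow_ge0 x y : 0 <= rpow x y.
Proof. unfold rpow; destruct (Rle_dec x 0); [lra | left; apply exp_pos]. Qed.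

Lemma rpow_gt0 x y : 0 < x -> 0 < rpow x y.
Proof. intros; rewrite rpow_Rpower by lra; apply exp_pos. Qed.

Lemma rpow_lt_compat x z y : 0 < y -> 0 <= x < z -> rpow x y < rpow z y.
Proof.
  intros Hy [Hx Hxz]; destruct (Req_dec x 0) as [->|].
  - rewrite rpow_0_l; apply rpow_gt0; lra.
  - rewrite !rpow_Rpower by lra; apply Rlt_Rpower_l; lra.
Qed.

Lemma rpow_le_compat x z y : 0 < y -> 0 <= x <= z -> rpow x y <= rpow z y.
Proof.
  intros Hy [Hx [Hxz| ->]]; [left; apply rpow_lt_compat; lra | lra].
Qed.

Lemma rpow_mult x z y : 0 <= x -> 0 <= z -> rpow (x * z) y = rpow x y * rpow z y.
Proof.
  intros Hx Hz; destruct (Req_dec x 0) as [->|]; [rewrite Rmult_0_l, !rpow_0_l; ring|].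
  destruct (Req_dec z 0) as [->|]; [rewrite Rmult_0_r, !rpow_0_l; ring|].
  rewrite !rpow_Rpower by nra; symmetry; apply Rpower_mult_distr; lra.
Qed.

Lemma ln_gt_1_sub_inv w : 0 < w -> w <> 1 -> 1 - / w < ln w.
Proof.
  intros Hw Hw1.
  assert (Hexp : 1 + - ln w < exp (- ln w)) by (apply exp_ineq1, Ropp_neq_0_compat, ln_neq_0; lra).
  rewrite exp_Ropp, exp_ln in Hexp by lra; lra.
Qed.

(* [w^P = w exp((P-1) ln w) >= w + (P-1) w ln w], and [w ln w > w - 1] for [w <> 1]. *)
Lemma Rpower_bernoulli_gt P w : 1 < P -> 0 < w -> w <> 1 -> 1 + P * (w - 1) < Rpower w P.
Proof.
  intros HP Hw Hw1.
  assert (Hsplit : Rpower w P = w * exp ((P - 1) * ln w)).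
  { unfold Rpower; rewrite <- (exp_ln w) at 2 by lra; rewrite <- exp_plus; f_equal; ring. }
  assert (Hexp := exp_ineq1_le ((P - 1) * ln w)).
  assert (Hln : w - 1 < w * ln w).
  { assert (H := ln_gt_1_sub_inv w Hw Hw1).
    apply (Rmult_lt_compat_l w) in H; [|lra].
    rewrite Rmult_minus_distr_l, Rinv_r in H by lra; lra. }
  rewrite Hsplit; nra.
Qed.

Lemma rpow_bernoulli_gt P w : 1 < P -> 0 <= w -> w <> 1 -> 1 + P * (w - 1) < rpow w P.
Proof.
  intros HP [Hw| <-] Hw1.
  - rewrite rpow_Rpower by lra; apply Rpower_bernoulli_gt; lra.
  - rewrite rpow_0_l; lra.
Qed.

Lemma rpow_bernoulli_ge P w : 1 < P -> 0 <= w -> 1 + P * (w - 1) <= rpow w P.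
Proof.
  intros HP Hw; destruct (Req_dec w 1) as [->|Hw1].
  - rewrite rpow_Rpower by lra; unfold Rpower; rewrite ln_1, Rmult_0_r, exp_0; lra.
  - left; apply rpow_bernoulli_gt; lra.
Qed.

Section Balance.

Variables P c B n : R.
Hypotheses (HP : 1 < P) (Hc : 0 < c) (HB : 0 < B) (Hn : 0 < n) (HBP : rpow B P = c * B).

Lemma balance_eq : c * rpow n P + rpow (B * n) P = (c + c * B) * rpow n P.
Proof. rewrite rpow_mult, HBP by lra; ring. Qed.

(* With [K = n w1] and [L = B n w2] we have [w1 + B w2 = B + 1],
   so the linear parts of Bernoulli's inequality for [w1] and [w2] cancel. *)
Lemma balance_gt K L : 0 <= K -> 0 <= L -> K + L = (B + 1) * n -> K <> n ->
  (c + c * B) * rpow n P < c * rpow K P + rpow L P.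
Proof.
  intros HK HL HKL HKn.
  set (w1 := K / n); set (w2 := L / (B * n)).
  assert (Hw1 : 0 <= w1) by (apply Rle_mult_inv_pos; lra).
  assert (Hw2 : 0 <= w2) by (apply Rle_mult_inv_pos; nra).
  assert (Hw1n : w1 <> 1) by (unfold w1; intro E; apply HKn; field_simplify_eq in E; lra).
  assert (Hw : w1 + B * w2 = B + 1) by (unfold w1, w2; field_simplify_eq; lra).
  assert (EK : rpow K P = rpow n P * rpow w1 P).
  { rewrite <- rpow_mult by lra; f_equal; unfold w1; field; lra. }
  assert (EL : rpow L P = c * B * rpow n P * rpow w2 P).
  { replace L with (B * (n * w2)) at 1 by (unfold w2; field; lra).
    rewrite !rpow_mult, HBP by nra; ring. }
  assert (Hb1 := rpow_bernoulli_gt P w1 HP Hw1 Hw1n).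
  assert (Hb2 := rpow_bernoulli_ge P w2 HP Hw2).
  assert (Hrn := rpow_gt0 n P Hn).
  assert (Hsum : c + c * B < c * rpow w1 P + c * B * rpow w2 P).
  { assert (c * (1 + P * (w1 - 1)) < c * rpow w1 P) by (apply Rmult_lt_compat_l; lra).
    assert (c * B * (1 + P * (w2 - 1)) <= c * B * rpow w2 P) by (apply Rmult_le_compat_l; nra).
    nra. }
  rewrite EK, EL.
  apply (Rmult_lt_compat_l (rpow n P)) in Hsum; [nra | lra].
Qed.

Lemma cost_gt K D : 0 <= K -> 0 <= D -> (B + 1) * n - K <= D ->
  K <> n \/ (B + 1) * n - K < D ->
  (c + c * B) * rpow n P < c * rpow K P + rpow D P.
Proof.
  intros HK HD HKD Hstrict.
  destruct (Rle_or_lt K ((B + 1) * n)) as [HKM|HKM].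
  - destruct (Req_dec K n) as [->|HKn].
    + rewrite <- balance_eq.
      assert (rpow (B * n) P < rpow D P) by (apply rpow_lt_compat; lra).
      lra.
    + assert (Hbal := balance_gt K ((B + 1) * n - K) HK ltac:(lra) ltac:(ring) HKn).
      assert (rpow ((B + 1) * n - K) P <= rpow D P) by (apply rpow_le_compat; lra).
      lra.
  - assert (Hbal := balance_gt ((B + 1) * n) 0 ltac:(nra) ltac:(lra) ltac:(ring) ltac:(nra)).
    assert (rpow ((B + 1) * n) P < rpow K P) by (apply rpow_lt_compat; nra).
    assert (Hc' := rpow_ge0 D P).
    rewrite rpow_0_l in Hbal; nra.
Qed.

End Balance.

Definition weight (s : list bool) : nat := hamming s (zeros (length s)).

Lemma hamming_app l1 l2 m1 m2 : length l1 = length m1 ->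
  hamming (l1 ++ l2) (m1 ++ m2) = (hamming l1 m1 + hamming l2 m2)%nat.
Proof.
  revert m1; induction l1 as [|x l1 IH]; intros [|y m1] H; simpl in *; try lia.
  rewrite IH by lia; lia.
Qed.

Lemma zeros_app m k : zeros (m + k) = zeros m ++ zeros k.
Proof. apply repeat_app. Qed.

Lemma weight_app s1 s2 : weight (s1 ++ s2) = (weight s1 + weight s2)%nat.
Proof.
  unfold weight; rewrite length_app, zeros_app, hamming_app; [reflexivity|].
  unfold zeros; rewrite repeat_length; reflexivity.
Qed.

Lemma hamming_ones_add_weight s : (hamming s (ones (length s)) + weight s)%nat = length s.
Proof.
  unfold weight, ones, zeros; induction s as [|x s IH]; simpl; [reflexivity|].
  destruct x; simpl; lia.
Qed.

Lemma weight_eq0 s : weight s = 0%nat <-> forall i, nth i s false = false.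
Proof.
  unfold weight, zeros; induction s as [|x s IH]; simpl.
  - split; [intros _ [|i]|]; reflexivity.
  - destruct x; simpl; split.
    + discriminate.
    + intros H; specialize (H 0%nat); discriminate.
    + intros H [|i]; [reflexivity | apply IH, H].
    + intros H; apply IH; intros i; apply (H (S i)).
Qed.

Lemma In_hs_zeros s k j : In j (hs s (zeros k)) <-> nth j s false = true.
Proof.
  unfold hs, zeros; rewrite filter_In, in_seq, nth_repeat.
  destruct (Nat.lt_ge_cases j (length s)) as [Hj|Hj].
  - destruct (nth j s false); simpl; intuition lia.
  - rewrite nth_overflow by lia; simpl; intuition discriminate.
Qed.

Lemma nth_true_bound_iff s1 s2 :
  (forall j, nth j (s1 ++ s2) false = true -> (j < length s1)%nat) <-> weight s2 = 0%nat.
Proof.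
  rewrite weight_eq0; split.
  - intros H i; destruct (nth i s2 false) eqn:E; [|reflexivity].
    assert (Hlt := H (length s1 + i)%nat); rewrite app_nth2, Nat.add_comm, Nat.add_sub in Hlt by lia.
    specialize (Hlt E); lia.
  - intros H j Hj; destruct (Nat.lt_ge_cases j (length s1)) as [|Hge]; [assumption|].
    rewrite app_nth2, H in Hj by lia; discriminate.
Qed.

Lemma weight_hs_zeros_iff s1 s2 k m :
  (weight (s1 ++ s2) = m /\ (forall j, In j (hs (s1 ++ s2) (zeros k)) -> (j < length s1)%nat))
  <-> ((weight s1 + weight s2)%nat = m /\ weight s2 = 0%nat).
Proof.
  setoid_rewrite In_hs_zeros; rewrite nth_true_bound_iff, weight_app; reflexivity.
Qed.

Lemma sum_pow_dist_repeat s t k p :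
  sum_pow_dist s (repeat t k) p = INR k * rpow (INR (hamming s t)) p.
Proof.
  unfold sum_pow_dist; induction k as [|k IH]; simpl repeat; simpl fold_right.
  - simpl; ring.
  - rewrite IH, S_INR; ring.
Qed.

Lemma sum_pow_dist_S_multiset a b nh s1 s2 p :
  length s1 = ((2 ^ b + 1) * nh)%nat -> length s2 = nh ->
  sum_pow_dist (s1 ++ s2) (S_multiset a b nh) p =
  rpow (INR (length s1 - weight s1 + weight s2)) p
  + INR (2 ^ (a - b)) * rpow (INR (weight s1 + weight s2)) p.
Proof.
  intros L1 L2; unfold S_multiset.
  change (sum_pow_dist ?s (?t :: ?T) p) with (rpow (INR (hamming s t)) p + sum_pow_dist s T p).
  rewrite sum_pow_dist_repeat.
  replace ((2 ^ b + 2) * nh)%nat with (length (s1 ++ s2)) by (rewrite length_app; lia).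
  rewrite <- L1, <- L2, hamming_app by (unfold ones; rewrite repeat_length; reflexivity).
  fold (weight s2) (weight (s1 ++ s2)); rewrite weight_app.
  pose proof (hamming_ones_add_weight s1).
  do 3 f_equal; lia.
Qed.

Lemma ratio_gt1 a b : (b < a)%nat -> (1 <= b)%nat -> 1 < INR a / INR b.
Proof.
  intros Hab Hb; apply lt_INR in Hab; assert (0 < INR b) by (apply lt_0_INR; lia).
  apply (Rmult_lt_reg_r (INR b)); [assumption|]; field_simplify; lra.
Qed.

Lemma rpow_pow2_ratio a b : (b <= a)%nat -> (1 <= b)%nat ->
  rpow (INR (2 ^ b)) (INR a / INR b) = INR (2 ^ (a - b)) * INR (2 ^ b).
Proof.
  intros Hab Hb.
  rewrite <- mult_INR, <- Nat.pow_add_r, Nat.sub_add, rpow_Rpower, !pow_INR by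
    (try apply lt_0_INR, Nat.neq_0_lt_0, Nat.pow_nonzero; lia).
  rewrite <- !Rpower_pow, Rpower_mult by (simpl; lra).
  f_equal; field; apply not_0_INR; lia.
Qed.

Lemma two_block_cost a b nh x y : (b < a)%nat -> (1 <= b)%nat -> (1 <= nh)%nat ->
  (x <= (2 ^ b + 1) * nh)%nat ->
  let p := INR a / INR b in
  let cost := rpow (INR ((2 ^ b + 1) * nh - x + y)) p + INR (2 ^ (a - b)) * rpow (INR (x + y)) p in
  let target := INR (2 ^ a + 2 ^ (a - b)) * rpow (INR nh) p in
  ((x + y)%nat = nh /\ y = 0%nat -> cost = target) /\
  (~ ((x + y)%nat = nh /\ y = 0%nat) -> target < cost).
Proof.
  intros hab hb hn Hx p cost target.
  set (M := ((2 ^ b + 1) * nh)%nat) in *.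
  set (c := INR (2 ^ (a - b))) in *; set (B := INR (2 ^ b)); set (n := INR nh) in *.
  assert (HP := ratio_gt1 a b hab hb).
  assert (Hc : 0 < c) by (apply lt_0_INR, Nat.neq_0_lt_0, Nat.pow_nonzero; lia).
  assert (HB : 0 < B) by (apply lt_0_INR, Nat.neq_0_lt_0, Nat.pow_nonzero; lia).
  assert (Hn : 0 < n) by (apply lt_0_INR; lia).
  assert (HBP : rpow B p = c * B) by (apply rpow_pow2_ratio; lia).
  assert (Htarget : target = (c + c * B) * rpow n p).
  { unfold target; rewrite <- (Nat.sub_add b a) at 1 by lia.
    rewrite Nat.pow_add_r, plus_INR, mult_INR; fold c B n; ring. }
  assert (EM : INR M = (B + 1) * n) by (unfold M, B, n; rewrite mult_INR, plus_INR; simpl; ring).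
  unfold cost; rewrite Htarget; split.
  - intros [Hxy Hy].
    replace (M - x + y)%nat with (2 ^ b * nh)%nat by (unfold M; lia).
    rewrite Hxy, mult_INR; fold B n.
    rewrite <- balance_eq by assumption; ring.
  - intros Hnc; rewrite (Rplus_comm (rpow _ p)), !plus_INR, minus_INR, EM by lia.
    pose proof (pos_INR x); pose proof (pos_INR y); pose proof (le_INR _ _ Hx).
    apply cost_gt; try assumption; try lra.
    destruct (Nat.eq_dec (x + y) nh) as [Hxy|Hxy].
    + right; assert (0 < INR y) by (apply lt_0_INR; lia); lra.
    + left; rewrite <- plus_INR; intro E; apply INR_eq in E; lia.
Qed.

Theorem lemma1 (a b nh : nat) (hab : (b < a)%nat) (hb : (1 <= b)%nat)
  (hcop : Nat.gcd a b = 1%nat) (hn : (1 <= nh)%nat)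
  (sstar : list bool) (hlen : length sstar = ((2 ^ b + 2) * nh)%nat) :
  let N := ((2 ^ b + 2) * nh)%nat in
  let p := INR a / INR b in
  let target := INR (2 ^ a + 2 ^ (a - b)) * rpow (INR nh) p in
  let cond := hamming sstar (zeros N) = nh /\
              (forall j, In j (hs sstar (zeros N)) -> (j < (2 ^ b + 1) * nh)%nat) in
  (cond -> sum_pow_dist sstar (S_multiset a b nh) p = target) /\
  (~ cond -> sum_pow_dist sstar (S_multiset a b nh) p > target).
Proof.
  intros N p target cond.
  set (M := ((2 ^ b + 1) * nh)%nat).
  set (s1 := firstn M sstar); set (s2 := skipn M sstar).
  assert (Es : sstar = s1 ++ s2) by (symmetry; apply firstn_skipn).
  assert (L1 : length s1 = M) by (unfold s1; rewrite length_firstn; lia).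
  assert (L2 : length s2 = nh) by (unfold s2; rewrite length_skipn; lia).
  assert (Hcond : cond <-> (weight s1 + weight s2)%nat = nh /\ weight s2 = 0%nat).
  { unfold cond, N; rewrite <- hlen, Es; change ((2 ^ b + 1) * nh)%nat with M; rewrite <- L1.
    apply weight_hs_zeros_iff. }
  assert (Hx : (weight s1 <= M)%nat) by (pose proof (hamming_ones_add_weight s1); lia).
  destruct (two_block_cost a b nh (weight s1) (weight s2) hab hb hn Hx) as [Heq Hgt].
  rewrite Es, sum_pow_dist_S_multiset, L1 by assumption.
  split; intros H; [apply Heq | apply Hgt]; tauto.
Qed.
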